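(* Let $(X,G)$ be a $G$-system with metric $d$ of diameter $\rho$, and let $\zeta\in\mathcal A[0,\rho]$ satisfy $k(\zeta):=k_m(\zeta)=k_M(\zeta)>0$. With $\zeta_d(x,y)=\zeta(d(x,y))$, $$\overline{\mathrm{mdim}}_{\mathrm M}(X,G,d)=k(\zeta)\,\overline{\mathrm{mdim}}_{\mathrm M}(X,G,\zeta_d),\qquad\underline{\mathrm{mdim}}_{\mathrm M}(X,G,d)=k(\zeta)\,\underline{\mathrm{mdim}}_{\mathrm M}(X,G,\zeta_d).$$
   Context: $G$ is a countable discrete amenable group; a $G$-system is a compact metric space with a continuous $G$-action. $\mathcal A[0,\rho]$ is the set of continuous, increasing, subadditive functions $\zeta:[0,\rho]\to[0,\infty)$ with $\zeta^{-1}(0)=\{0\}$; $k_m(\zeta)=\liminf_{\varepsilon\to0^+}\frac{\log\zeta(\varepsilon)}{\log\varepsilon}$, $k_M(\zeta)=\limsup_{\varepsilon\to0^+}\frac{\log\zeta(\varepsilon)}{\log\varepsilon}$. For a Følner sequence $(F_n)$ and metric $\rho'$, $\rho'_F(x,y)=\max_{g\in F}\rho'(gx,gy)$, $s_F(\rho',\varepsilon,X)$ is the maximal cardinality of a subset whose distinct points have $\rho'_F$-distance $>\varepsilon$; $\overline{\mathrm{mdim}}_{\mathrm M}(X,G,\rho')=\limsup_{\varepsilon\to0}\frac1{|\log\varepsilon|}\limsup_n\frac1{|F_n|}\log s_{F_n}(\rho',\varepsilon,X)$ and $\underline{\mathrm{mdim}}_{\mathrm M}$ the same with $\liminf_{\varepsilon\to0}$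 (equivalently with minimal spanning-set cardinalities; independent of the Følner sequence). *)

From HB Require Import structures.
From mathcomp Require Import all_boot all_order all_algebra.
From mathcomp Require Import monoid.
From mathcomp Require Import all_classical all_reals all_analysis.

Set Implicit Arguments.
Unset Strict Implicit.
Unset Printing Implicit Defensive.

Import Order.TTheory GRing.Theory Num.Theory.
Import numFieldNormedType.Exports.

Local Open Scope classical_set_scope.
Local Open Scope ring_scope.

Definition countable_group (G : groupType) : Prop :=
  exists f : G -> nat, injective f.

(* Cardinality of the symmetric difference  gF Δ F  for a finite set F
   given as a duplicate-free list (left translation by g).            *)
Definition symdiff_card (G : groupType) (g : G) (F : seq G) : nat :=
  (size [seq x <- map (monoid.mul g) F | x \notin F]
   + size [seq x <- F | x \notin map (monoid.mul g) F])%N.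

Definition folner (R : realType) (G : groupType) (F : nat -> seq G) : Prop :=
  (forall n, uniq (F n) /\ (0 < size (F n))%N) /\
  forall g : G,
    (fun n => ((symdiff_card g (F n))%:R / (size (F n))%:R : R)) @ \oo --> (0 : R).

Definition continuous_action (G : groupType) (X : topologicalType)
    (act : G -> X -> X) : Prop :=
  [/\ forall g, continuous (act g),
      forall x, act (monoid.one : G) x = x &
      forall g h x, act (monoid.mul g h) x = act g (act h x)].

Definition metric_inducing (R : realType) (X : topologicalType)
    (d : X -> X -> R) : Prop :=
  [/\ forall x y, 0 <= d x y,
      forall x y, d x y = 0 <-> x = y,
      forall x y, d x y = d y x,
      forall x y z, d x z <= d x y + d y z &
      forall (x : X) (A : set X),
        nbhs x A <-> exists2 e : R, 0 < e & [set y | d x y < e] `<=` A].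

Definition diameter (R : realType) (X : Type) (d : X -> X -> R) : R :=
  sup [set r | exists x y, r = d x y].

Definition classA (R : realType) (rho : R) (zeta : R -> R) : Prop :=
  [/\ {within `[0, rho], continuous zeta},
      (forall s t, s \in `[0, rho] -> t \in `[0, rho] -> s <= t ->
         zeta s <= zeta t),
      (forall s t, 0 <= s -> 0 <= t -> s + t <= rho ->
         zeta (s + t) <= zeta s + zeta t),
      (forall t, t \in `[0, rho] -> 0 <= zeta t) &
      (forall t, t \in `[0, rho] -> (zeta t = 0 <-> t = 0))].

Local Open Scope ereal_scope.

Definition k_m (R : realType) (zeta : R -> R) : \bar R :=
  limf_einf (fun e : R => (ln (zeta e) / ln e)%:E) (0%R)^'+.
Definition k_M (R : realType) (zeta : R -> R) : \bar R :=
  limf_esup (fun e : R => (ln (zeta e) / ln e)%:E) (0%R)^'+.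

Local Close Scope ereal_scope.

Definition bowen (R : realType) (G : groupType) (X : Type) (act : G -> X -> X)
    (rho : X -> X -> R) (F : seq G) (x y : X) : R :=
  \big[Num.max/0]_(g <- F) rho (act g x) (act g y).

Definition separated (R : realType) (G : groupType) (X : choiceType)
    (act : G -> X -> X) (rho : X -> X -> R) (F : seq G) (e : R) (s : seq X) :=
  uniq s /\ forall x y, x \in s -> y \in s -> x != y -> e < bowen act rho F x y.

Definition sep_num (R : realType) (G : groupType) (X : choiceType)
    (act : G -> X -> X) (rho : X -> X -> R) (F : seq G) (e : R) : R :=
  sup [set (size s)%:R | s in [set s : seq X | separated act rho F e s]].

Definition mdim_level (R : realType) (G : groupType) (X : choiceType)
    (act : G -> X -> X) (F : nat -> seq G) (rho : X -> X -> R) (e : R) : \bar R :=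
  limn_esup (fun n => (ln (sep_num act rho (F n) e) / (size (F n))%:R)%:E).

Local Open Scope ereal_scope.

Definition mdimM_upper (R : realType) (G : groupType) (X : choiceType)
    (act : G -> X -> X) (F : nat -> seq G) (rho : X -> X -> R) : \bar R :=
  limf_esup (fun e : R => ((`|ln e|)^-1)%:E * mdim_level act F rho e) (0%R)^'+.

Definition mdimM_lower (R : realType) (G : groupType) (X : choiceType)
    (act : G -> X -> X) (F : nat -> seq G) (rho : X -> X -> R) : \bar R :=
  limf_einf (fun e : R => ((`|ln e|)^-1)%:E * mdim_level act F rho e) (0%R)^'+.

From Pilot Require Import Defs.
From HB Require Import structures.
From mathcomp Require Import all_boot all_order all_algebra.
From mathcomp Require Import all_classical all_reals all_analysis.
From mathcomp Require Import lra.

Set Implicit Arguments.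
Unset Strict Implicit.
Unset Printing Implicit Defensive.

Import Order.TTheory GRing.Theory Num.Theory.
Import numFieldNormedType.Exports.

Local Open Scope classical_set_scope.
Local Open Scope ring_scope.

(* Write zeta_d for zeta o d.  Since zeta is increasing, a set whose points are
   pairwise more than zeta(e) apart for the Bowen metric of zeta_d is e-separated
   for d, and an e-separated set for d is zeta(e)/2-separated for zeta_d.  So the
   e-level of d is squeezed between the levels of zeta_d at zeta(e) and zeta(e)/2.
   By continuity and the intermediate value theorem, zeta(e) and zeta(e)/2 sweep
   out all small positive levels as e -> 0+, so after normalising by |log e| on one
   side and |log zeta(e)| on the other, the two mean dimensions differ by the
   limit of |log zeta(e)| / |log e|, which is k(zeta).  Subadditivity makes zeta
   at least linear near 0, so k(zeta) is finite. *)

Section Bowen.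
Variables (R : realType) (G : groupType) (X : Type) (act : G -> X -> X).
Variable rho : X -> X -> R.

Lemma bowen_ge (F : seq G) g x y :
  g \in F -> rho (act g x) (act g y) <= bowen act rho F x y.
Proof. by move=> gF; rewrite /bowen le_bigmax_seq. Qed.

Lemma bowen_le (F : seq G) x y e : 0 <= e ->
  (forall g, g \in F -> rho (act g x) (act g y) <= e) -> bowen act rho F x y <= e.
Proof. by move=> e0 le_e; rewrite /bowen big_seq bigmax_le. Qed.

Lemma bowen_lt (F : seq G) x y e : 0 < e ->
  (forall g, g \in F -> rho (act g x) (act g y) < e) -> bowen act rho F x y < e.
Proof. by move=> e0 lt_e; rewrite /bowen big_seq bigmax_lt. Qed.

Hypothesis rhoC : forall x y, rho x y = rho y x.
Hypothesis rho_triangle : forall x y z, rho x z <= rho x y + rho y z.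

Lemma bowenC (F : seq G) x y : bowen act rho F x y = bowen act rho F y x.
Proof. by apply: eq_bigr => g _; rewrite rhoC. Qed.

Lemma bowen_triangle (F : seq G) x y z :
  bowen act rho F x z <= bowen act rho F x y + bowen act rho F y z.
Proof.
rewrite /bowen big_seq bigmax_le ?addr_ge0 ?bigmax_ge_id // => g gF.
by rewrite (le_trans (rho_triangle _ (act g y) _)) // lerD ?le_bigmax_seq.
Qed.

End Bowen.

Section SeparatedSets.
Variables (R : realType) (G : groupType) (X : choiceType) (act : G -> X -> X).
Implicit Types (rho : X -> X -> R) (F : seq G) (e : R) (s : seq X).

Definition sep_bounded (rho : X -> X -> R) (F : seq G) (e : R) :=
  exists N : nat, forall s, Defs.separated act rho F e s -> (size s <= N)%N.

Lemma separated_nil rho F e : Defs.separated act rho F e [::].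
Proof. by split. Qed.

Lemma separated1 rho F e x : Defs.separated act rho F e [:: x].
Proof. by split=> // a b; rewrite !inE => /eqP -> /eqP ->; rewrite eqxx. Qed.

Lemma separated_le rho F e1 e2 s : e1 <= e2 ->
  Defs.separated act rho F e2 s -> Defs.separated act rho F e1 s.
Proof.
by move=> e12 [s_uniq s_sep]; split=> // x y xs ys xy; apply: le_lt_trans (s_sep _ _ xs ys xy).
Qed.

Lemma sep_num_ub rho F e s : sep_bounded rho F e ->
  Defs.separated act rho F e s -> (size s)%:R <= sep_num act rho F e.
Proof.
move=> [N sizeN] s_sep; apply: sup_upper_bound; last by exists s.
split; first by exists 0, [::]; first exact: separated_nil.
by exists N%:R => _ [t t_sep <-]; rewrite ler_nat sizeN.
Qed.

Lemma sep_num_le_ub rho F e (M : R) :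
  (forall s, Defs.separated act rho F e s -> (size s)%:R <= M) -> sep_num act rho F e <= M.
Proof.
move=> sizeM; apply: sup_le_ub; first by exists 0, [::]; first exact: separated_nil.
by move=> _ [s s_sep <-]; apply: sizeM.
Qed.

Lemma sep_num_le rho1 rho2 F1 F2 e1 e2 : sep_bounded rho2 F2 e2 ->
  (forall s, Defs.separated act rho1 F1 e1 s -> Defs.separated act rho2 F2 e2 s) ->
  sep_num act rho1 F1 e1 <= sep_num act rho2 F2 e2.
Proof.
by move=> bounded2 sep12; apply: sep_num_le_ub => s /sep12; apply: sep_num_ub.
Qed.

Lemma sep_num_ge1 rho F e (x : X) : sep_bounded rho F e -> 1 <= sep_num act rho F e.
Proof. by move=> bounded; apply: (sep_num_ub bounded (separated1 _ _ _ x)). Qed.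

Lemma ln_sep_num_subsingleton rho F e :
  (forall x y : X, x = y) -> ln (sep_num act rho F e) = 0.
Proof.
move=> X_sub; have small s : Defs.separated act rho F e s -> (size s <= 1)%N.
  by case: s => [|a [|b t]] // [/=]; rewrite inE (X_sub a b) eqxx.
have bounded : sep_bounded rho F e by exists 1%N.
have le1 : sep_num act rho F e <= 1.
  by apply: sep_num_le_ub => s /small; rewrite lern1.
have [[x _]|X0] := pselect (exists x : X, True).
  by rewrite (@le_anti _ _ (sep_num act rho F e) 1) ?ln1 // le1 (sep_num_ge1 x).
suff -> : sep_num act rho F e = 0 by rewrite ln0.
apply/le_anti; rewrite (sep_num_ub bounded (separated_nil _ _ _)) andbT.
by apply: sep_num_le_ub => -[|a t] // _; case: X0; exists a.
Qed.

End SeparatedSets.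

(* Lists ordered by inclusion; compactness along this filter yields finite nets. *)
Definition superlist_filter (T : eqType) : set_system (seq T) :=
  fun Q => exists A : seq T, forall s, {subset A <= s} -> Q s.

Lemma superlist_filter_filter (T : eqType) : Filter (@superlist_filter T).
Proof.
split; first by exists [::].
- move=> P Q [A HA] [B HB]; exists (A ++ B) => s sub; split.
    by apply: HA => z zA; apply: sub; rewrite mem_cat zA.
  by apply: HB => z zB; apply: sub; rewrite mem_cat zB orbT.
- by move=> P Q PQ [A HA]; exists A => s /HA /PQ.
Qed.

Lemma compact_finite_net (R : realType) (X : topologicalType) (rho : X -> X -> R) e :
  compact [set: X] -> (forall x, \forall y \near x, rho x y < e) ->
  exists C : seq X, forall y, exists2 c, c \in C & rho c y < e.
Proof.
move=> cptX near_e.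
have [x _|A netA] := (proj1 (compact_near_coveringP _) cptX) _ _
  (fun C y => exists2 c, c \in C & rho c y < e) (@superlist_filter_filter X).
  exists ([set y | rho x y < e], [set C | x \in C]); first split.
  - exact: near_e.
  - by exists [:: x] => C; apply; rewrite mem_head.
  by move=> [y C] [/= xy xC]; exists x.
by exists A => y; apply: netA.
Qed.

Section CompactMetric.
Variables (R : realType) (X : topologicalType) (d : X -> X -> R).
Hypothesis cptX : compact [set: X].
Hypothesis d_metric : metric_inducing d.

Lemma metric_near x e : 0 < e -> \forall y \near x, d x y < e.
Proof. by case: d_metric => _ _ _ _ nbhsE e0; apply/nbhsE; exists e. Qed.

Lemma metric_bounded : exists M, forall x y, d x y <= M.
Proof.
have [C netC] := compact_finite_net cptX (fun x => metric_near x ltr01).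
case: d_metric => _ _ dC d_triangle _.
set M := \big[Num.max/0]_(a <- C) \big[Num.max/0]_(b <- C) d a b.
exists (1 + M + 1) => x y.
have [a aC xa] := netC x; have [b bC yb] := netC y.
have ab : d a b <= M.
  by rewrite (le_trans _ (le_bigmax_seq _ _ _ _ aC isT)) // (le_bigmax_seq _ _ _ _ bC isT).
have := d_triangle x a y; have := d_triangle a b y.
rewrite dC in xa; lra.
Qed.

Lemma metric_le_diameter x y : 0 <= d x y <= diameter d.
Proof.
have [M d_le] := metric_bounded.
case: d_metric => d_ge0 _ _ _ _; rewrite d_ge0 /=.
apply: sup_upper_bound; last by exists x, y.
by split; [exists (d x y), x, y | exists M => _ [a [b ->]]].
Qed.

Lemma diameter_gt0 (x y : X) : x <> y -> 0 < diameter d.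
Proof.
case: d_metric => d_ge0 d_eq0 _ _ _ xy; have /andP [_ d_le] := metric_le_diameter x y.
by apply: lt_le_trans d_le; rewrite lt_def d_ge0 andbT; apply/eqP => /d_eq0.
Qed.

End CompactMetric.

Section MetricSystem.
Variables (R : realType) (G : groupType) (X : topologicalType).
Variables (act : G -> X -> X) (d : X -> X -> R).
Hypothesis act_cont : continuous_action act.
Hypothesis cptX : compact [set: X].
Hypothesis d_metric : metric_inducing d.

Lemma bowen_near (F : seq G) x e : 0 < e -> \forall y \near x, bowen act d F x y < e.
Proof.
move=> e0; case: act_cont => act_g_cont _ _.
suff : \forall y \near x, forall g, g \in F -> d (act g x) (act g y) < e.
  by apply: filterS => y; exact: bowen_lt.
elim: F => [|g F IH]; first by near=> y => g; rewrite in_nil.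
have near_g : \forall y \near x, d (act g x) (act g y) < e.
  exact: act_g_cont g x _ (metric_near d_metric _ e0).
near=> y => h; rewrite in_cons => /orP [/eqP -> | hF].
  exact: (near near_g y).
exact: (near IH y).
Unshelve. all: end_near.
Qed.

Lemma separated_bounded (F : seq G) e : 0 < e -> sep_bounded act d F e.
Proof.
move=> e0; have e20 : 0 < e / 2 by rewrite divr_gt0.
have [C netC] := compact_finite_net cptX (fun x => bowen_near F x e20).
have /choice [c netc] : forall y, exists c, c \in C /\ bowen act d F c y < e / 2.
  by move=> y; have [c cC cy] := netC y; exists c.
case: d_metric => _ _ dC d_triangle _.
exists (size C) => s [s_uniq s_sep].
rewrite -(size_map c s); apply: uniq_leq_size => [|_ /mapP [y _ ->]]; last by case: (netc y).
rewrite map_inj_in_uniq // => x y xs ys cxy; apply/eqP; apply: contraT => xy; rewrite -(ltxx e).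
apply: lt_trans (s_sep x y xs ys xy) _.
have [_ cx] := netc x; have [_ cy] := netc y; rewrite cxy in cx.
rewrite (le_lt_trans (@bowen_triangle _ _ _ act d d_triangle F x (c y) y)) //.
by rewrite bowenC // [e]splitr ltrD.
Qed.

End MetricSystem.

Section LimfEsup.
Variables (R : realType) (T0 : choiceType) (T : filteredType T0).
Implicit Types (F : set_system T) (f g : T -> \bar R).
Local Open Scope ereal_scope.

Lemma limf_esup_le_near F f g : Filter F ->
  (\forall x \near F, f x <= g x) -> limf_esup f F <= limf_esup g F.
Proof.
move=> FF fg; rewrite !limf_esupE; apply: le_ereal_inf_tmp => _ [V FV <-].
apply: ge_ereal_inf; exists (ereal_sup (f @` (V `&` [set x | f x <= g x]))).
  by exists (V `&` [set x | f x <= g x]) => //; apply: filterI.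
apply: ge_ereal_sup => _ [x [Vx fgx] <-].
by apply: le_trans fgx _; apply: ereal_sup_ubound; exists x.
Qed.

Lemma limf_esup_le F f (a : \bar R) : Filter F ->
  (\forall x \near F, f x <= a) -> limf_esup f F <= a.
Proof.
move=> FF fa; rewrite limf_esupE; apply: ereal_inf_le.
exists (ereal_sup (f @` [set x | f x <= a])); first by exists [set x | f x <= a].
by apply: ge_ereal_sup => _ [x xa <-].
Qed.

Lemma limf_esup_lt_near F f a : Filter F ->
  limf_esup f F < a -> \forall x \near F, f x < a.
Proof.
move=> FF; rewrite limf_esupE => /ereal_inf_lt [_ [V FV <-] Va].
by apply: filterS FV => x Vx; apply: le_lt_trans Va; apply: ereal_sup_ubound; exists x.
Qed.

Lemma limf_esup_pZl F f (c : R) : (0 < c)%R ->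
  limf_esup (fun x => c%:E * f x) F = c%:E * limf_esup f F.
Proof.
move=> c0; rewrite !limf_esupE -ereal_inf_pZl //; congr ereal_inf.
rewrite image_comp /=; apply: eq_imagel => V FV /=.
by rewrite -ereal_sup_pZl // image_comp.
Qed.

Lemma limf_esup_comp (U0 : choiceType) (U : filteredType U0) F (h : T -> U)
    (f : U -> \bar R) : Filter F ->
  limf_esup (f \o h) F = limf_esup f (h @ F).
Proof.
move=> FF; rewrite !limf_esupE; apply/le_anti/andP; split.
  apply: le_ereal_inf_tmp => _ [W FhW <-]; apply: ge_ereal_inf.
  exists (ereal_sup ((f \o h) @` (h @^-1` W))); first by exists (h @^-1` W).
  by apply: ge_ereal_sup => _ [x Wx <-]; apply: ereal_sup_ubound; exists (h x).
apply: le_ereal_inf_tmp => _ [V FV <-]; apply: ge_ereal_inf.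
exists (ereal_sup (f @` (h @` V))).
  exists (h @` V) => //.
  by have : F (h @^-1` (h @` V)) by apply: filterS FV => x Vx; exists x.
by rewrite image_comp.
Qed.

Lemma limf_einf_le_near F f g : Filter F ->
  (\forall x \near F, f x <= g x) -> limf_einf f F <= limf_einf g F.
Proof.
move=> FF fg; rewrite /limf_einf leeN2; apply: limf_esup_le_near.
by apply: filterS fg => x; rewrite /= leeN2.
Qed.

Lemma limf_einf_gt_near F f a : Filter F ->
  a < limf_einf f F -> \forall x \near F, a < f x.
Proof.
move=> FF; rewrite /limf_einf -lteN2 oppeK => /limf_esup_lt_near.
by apply: filterS => x /=; rewrite lteN2.
Qed.

Lemma limf_einf_pZl F f (c : R) : (0 < c)%R ->
  limf_einf (fun x => c%:E * f x) F = c%:E * limf_einf f F.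
Proof.
move=> c0; rewrite /limf_einf muleN -limf_esup_pZl //; congr (- _).
by congr limf_esup; apply: funext => x /=; rewrite muleN.
Qed.

Lemma limf_einf_comp (U0 : choiceType) (U : filteredType U0) F (h : T -> U)
    (f : U -> \bar R) : Filter F ->
  limf_einf (f \o h) F = limf_einf f (h @ F).
Proof. by move=> FF; rewrite /limf_einf -limf_esup_comp. Qed.

Lemma limf_esup_cst F (a : \bar R) : ProperFilter F -> limf_esup (cst a) F = a.
Proof.
move=> FF; apply/le_anti; rewrite limf_esup_le ?lexx; last exact: nearW.
rewrite limf_esupE; apply: le_ereal_inf_tmp => _ [V FV <-].
by have [x Vx] := filter_ex FV; apply: ereal_sup_ubound; exists x.
Qed.

Lemma limf_einf_cst F (a : \bar R) : ProperFilter F -> limf_einf (cst a) F = a.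
Proof. by move=> FF; rewrite /limf_einf (_ : \- cst a = cst (- a)) // limf_esup_cst ?oppeK. Qed.

Lemma limf_esup_ge0_near F f : ProperFilter F ->
  (\forall x \near F, 0 <= f x) -> 0 <= limf_esup f F.
Proof. by move=> FF f0; rewrite -(limf_esup_cst 0 FF) limf_esup_le_near. Qed.

Lemma limf_einf_ge0_near F f : ProperFilter F ->
  (\forall x \near F, 0 <= f x) -> 0 <= limf_einf f F.
Proof. by move=> FF f0; rewrite -(limf_einf_cst 0 FF) limf_einf_le_near. Qed.

End LimfEsup.

Section PosMulApprox.
Variable R : realType.
Local Open Scope ereal_scope.

Lemma lee_pmul_gt (x L : \bar R) (c : R) : (0 < c)%R -> 0 <= L ->
  (forall c', (c < c')%R -> x <= c'%:E * L) -> x <= c%:E * L.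
Proof.
move=> c0; case: L => [l| |] // l0 le_x; last by rewrite muleC gt0_mulye ?leey.
have cc1 : (c < c + 1)%R by rewrite ltrDl.
case: x le_x => [r| |] le_x; last by rewrite leNye.
  rewrite -EFinM lee_fin; apply/ler_addgt0Pr => eps eps0.
  move: l0; rewrite lee_fin le_eqVlt => /predU1P [l_eq0|l_gt0].
    move/(_ _ cc1): le_x; rewrite -l_eq0 -EFinM lee_fin !mulr0 add0r => r0.
    exact: le_trans r0 (ltW eps0).
  have := le_x (c + eps / l)%R; rewrite -EFinM lee_fin mulrDl mulfVK ?gt_eqF //; apply.
  by rewrite ltrDl divr_gt0.
by have := le_x _ cc1; rewrite -EFinM leye_eq.
Qed.

Lemma lee_pmul_antisym (x y : \bar R) (k : R) : (0 < k)%R ->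
  x <= k%:E * y -> y <= k^-1%:E * x -> x = k%:E * y.
Proof.
move=> k0 xy yx; apply/le_anti; rewrite xy /=.
apply: le_trans (lee_wpmul2l _ yx) _; first by rewrite lee_fin ltW.
by rewrite muleA -EFinM mulfV ?gt_eqF ?mul1e.
Qed.

End PosMulApprox.

Section MdimLevel.
Variables (R : realType) (G : groupType) (X : choiceType) (act : G -> X -> X).
Variable F : nat -> seq G.
Implicit Types (rho : X -> X -> R) (e : R).

Lemma mdim_level_le rho1 rho2 e1 e2 (x : X) :
  (forall n, sep_bounded act rho2 (F n) e2) ->
  (forall n s, Defs.separated act rho1 (F n) e1 s -> Defs.separated act rho2 (F n) e2 s) ->
  (mdim_level act F rho1 e1 <= mdim_level act F rho2 e2)%E.
Proof.
move=> bounded2 sep12; apply: limf_esup_le_near; apply: nearW => n.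
have bounded1 : sep_bounded act rho1 (F n) e1.
  by have [N sizeN] := bounded2 n; exists N => s /sep12/sizeN.
have sep12_le := sep_num_le (bounded2 n) (sep12 n).
have sep1_gt0 := lt_le_trans ltr01 (sep_num_ge1 x bounded1).
rewrite lee_fin ler_wpM2r ?invr_ge0 // ler_ln ?posrE //.
exact: lt_le_trans sep1_gt0 sep12_le.
Qed.

Lemma mdim_level_ge0 rho e (x : X) :
  (forall n, sep_bounded act rho (F n) e) -> (0 <= mdim_level act F rho e)%E.
Proof.
move=> bounded; apply: limf_esup_ge0 => [|n]; first exact: filter_not_empty.
by rewrite lee_fin divr_ge0 // ln_ge0 // (sep_num_ge1 x).
Qed.

Lemma mdim_level_subsingleton rho e :
  (forall x y : X, x = y) -> mdim_level act F rho e = 0%E.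
Proof.
move=> X_sub; rewrite /mdim_level /limn_esup -(limf_esup_cst 0%E eventually_filter).
by congr limf_esup; apply: funext => n; rewrite ln_sep_num_subsingleton // mul0r.
Qed.

Lemma mdimM_subsingleton rho : (forall x y : X, x = y) ->
  mdimM_upper act F rho = 0%E /\ mdimM_lower act F rho = 0%E.
Proof.
move=> X_sub; rewrite /mdimM_upper /mdimM_lower.
have -> : (fun e => ((`|ln e|)^-1)%:E * mdim_level act F rho e)%E = cst 0%E.
  by apply: funext => e; rewrite mdim_level_subsingleton // mule0.
by rewrite limf_esup_cst ?limf_einf_cst.
Qed.

End MdimLevel.

Section AtRight0.
Variable R : realType.

Lemma at_right0P (P : R -> Prop) :
  (\forall e \near 0^'+, P e) <-> exists2 t : R, 0 < t & forall e, 0 < e < t -> P e.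
Proof.
split=> [/nbhs_ballP [t t0 Pt]|[t t0 Pt]].
  exists t => // e /andP [e0 et]; apply: Pt => //.
  by rewrite /ball /= sub0r normrN gtr0_norm.
apply/nbhs_ballP; exists t => // e; rewrite /ball /= sub0r normrN => et e0.
by apply: Pt; rewrite e0 -(gtr0_norm e0).
Qed.

Lemma at_right0_scale (c : R) : 0 < c -> (fun x => x * c) @ 0^'+ = 0^'+.
Proof.
move=> c0; apply/seteqP; split=> V /at_right0P [t t0 Vt]; apply/at_right0P.
  exists (t * c) => [|e /andP [e0 etc]]; first exact: mulr_gt0.
  rewrite -(divfK (lt0r_neq0 c0) e); apply: Vt.
  by rewrite divr_gt0 // ltr_pdivrMr.
exists (t / c) => [|e /andP [e0 etc]]; first exact: divr_gt0.
by apply: Vt; rewrite mulr_gt0 // -ltr_pdivlMr.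
Qed.

Lemma at_right0_lt1 : \forall e \near (0 : R)^'+, 0 < e < 1.
Proof. by apply/at_right0P; exists 1. Qed.

Lemma at_right0_cvg_near (h : R -> R) t :
  h e @[e --> 0^'+] --> 0^'+ -> 0 < t -> \forall e \near 0^'+, 0 < h e < t.
Proof. by move=> h0 t0; apply: (h0 [set d | 0 < d < t]); apply/at_right0P; exists t. Qed.

Lemma norm_ln_div (x y : R) : 0 < x < 1 -> 0 < y < 1 ->
  `|ln x| / `|ln y| = ln x / ln y.
Proof.
by move=> /ln_lt0 x0 /ln_lt0 y0; rewrite !ltr0_norm // invrN mulrNN.
Qed.

Lemma limf_einf_esup_cvg (T0 : choiceType) (T : filteredType T0) (F : set_system T)
    (f : T -> R) (l : R) : Filter F ->
  limf_einf (fun x => (f x)%:E) F = l%:E -> limf_esup (fun x => (f x)%:E) F = l%:E ->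
  f @ F --> l.
Proof.
move=> FF inf_l sup_l; apply/cvgrPdist_lt => eps eps0.
have lt_sup : (limf_esup (fun x => (f x)%:E) F < (l + eps)%:E)%E.
  by rewrite sup_l lte_fin ltrDl.
have gt_inf : ((l - eps)%:E < limf_einf (fun x => (f x)%:E) F)%E.
  by rewrite inf_l lte_fin gtrDl oppr_lt0.
apply: filterS2 (limf_esup_lt_near FF lt_sup) (limf_einf_gt_near FF gt_inf) => x.
by rewrite !lte_fin => ? ?; rewrite ltr_distlC; apply/andP; split.
Qed.

End AtRight0.

Section ClassA.
Variables (R : realType) (rho : R) (zeta : R -> R).
Hypothesis rho_gt0 : 0 < rho.
Hypothesis zetaA : classA rho zeta.

Lemma classA_zeta0 : zeta 0 = 0.
Proof.
by case: zetaA => _ _ _ _ zeta_eq0; apply/zeta_eq0; rewrite // in_itv /= lexx ltW.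
Qed.

Lemma classA_le s t : s \in `[0, rho] -> t \in `[0, rho] -> s <= t -> zeta s <= zeta t.
Proof. by case: zetaA => _ zeta_le _ _ _; apply: zeta_le. Qed.

Lemma classA_gt0 t : 0 < t <= rho -> 0 < zeta t.
Proof.
case: zetaA => _ _ _ zeta_ge0 zeta_eq0 /andP [t0 tr].
have t_in : t \in `[0, rho] by rewrite in_itv /= tr ltW.
rewrite lt_def zeta_ge0 // andbT; apply/eqP => /(zeta_eq0 _ t_in) t_eq0.
by rewrite t_eq0 ltxx in t0.
Qed.

Lemma classA_natmul_le (n : nat) t :
  0 <= t -> n%:R * t <= rho -> zeta (n%:R * t) <= n%:R * zeta t.
Proof.
case: zetaA => _ _ zeta_subadd _ _ t0.
elim: n => [|n IH] ntr; first by rewrite !mul0r classA_zeta0.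
move: ntr; rewrite -natr1 !mulrDl !mul1r => ntr.
apply: le_trans (zeta_subadd _ _ _ t0 ntr) _; first by rewrite mulr_ge0.
by rewrite lerD2r IH // (le_trans _ ntr) // lerDl.
Qed.

Lemma classA_linear_lb : exists2 c, 0 < c & forall e, 0 < e <= rho / 2 -> c * e <= zeta e.
Proof.
have rho2_gt0 : 0 < rho / 2 by rewrite divr_gt0.
exists (zeta (rho / 2) / rho) => [|e /andP [e0 e_rho2]].
  by rewrite divr_gt0 // classA_gt0 // rho2_gt0 ler_pdivrMr //; lra.
have rho_e_ge0 : 0 <= rho / e by rewrite divr_ge0 // ltW.
have /andP [n_le n_gt] := truncn_itv rho_e_ge0.
set n := Num.trunc (rho / e) in n_le n_gt.
have ne_le : n%:R * e <= rho by rewrite -ler_pdivlMr.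
have ne_ge : rho / 2 <= n%:R * e by rewrite ltr_pdivrMr // -natr1 in n_gt; lra.
have : zeta (rho / 2) <= n%:R * zeta e.
  apply: le_trans _ (classA_natmul_le (ltW e0) ne_le); apply: classA_le => //.
    by rewrite in_itv /= ltW //= ler_pdivrMr //; lra.
  by rewrite in_itv /= ne_le mulr_ge0 // ltW.
have ze_ge0 : 0 <= zeta e by rewrite ltW // classA_gt0 // e0 /=; lra.
rewrite mulrAC ler_pdivrMr // => le_n; apply: le_trans (ler_wpM2r (ltW e0) le_n) _.
by rewrite mulrAC mulrC ler_wpM2l.
Qed.

Lemma classA_k_M_le2 : (k_M zeta <= 2%:E)%E.
Proof.
have [c c0 c_le] := classA_linear_lb.
have rho2_gt0 : 0 < rho / 2 by rewrite divr_gt0.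
apply: limf_esup_le; near=> e.
have e0 : 0 < e by near: e; exact: nbhs_right_gt.
have lne_lt0 : ln e < 0 by rewrite ln_lt0 // e0; near: e; exact: nbhs_right_lt.
have ee_le : e * e <= zeta e.
  apply: le_trans (c_le e _); last by rewrite e0; near: e; exact: nbhs_right_le.
  by rewrite ler_wpM2r ?ltW //; near: e; exact: nbhs_right_lt.
have ze_gt0 : 0 < zeta e := lt_le_trans (mulr_gt0 e0 e0) ee_le.
have : ln (e * e) <= ln (zeta e) by rewrite ler_ln ?posrE ?mulr_gt0.
by rewrite lee_fin ler_ndivrMr // lnM ?posrE //; lra.
Unshelve. all: end_near.
Qed.

Lemma classA_k_M_real : (0 < k_M zeta)%E -> exists2 k, 0 < k & k_M zeta = k%:E.
Proof.
move=> k_gt0; have k_fin : k_M zeta \is a fin_num.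
  by rewrite ge0_fin_numE ?(ltW k_gt0) // (le_lt_trans classA_k_M_le2) ?ltey.
by exists (fine (k_M zeta)); rewrite ?fineK // -lte_fin fineK.
Qed.

Lemma classA_cvg_at_right : zeta e @[e --> 0^'+] --> 0^'+.
Proof.
case: zetaA => zeta_cont _ _ _ _.
have zero_in : (0 : R) \in `[0, rho] by rewrite in_itv /= lexx ltW.
move=> V /at_right0P [t t0 Vt]; apply/at_right0P.
have /cvgrPdist_lt/(_ t t0) := (subspace_continuousP _ _).1 zeta_cont 0 zero_in.
case/nbhs_ballP => r r0 near0; exists (Num.min r rho) => [|e /andP [e0]].
  by rewrite lt_min r0.
rewrite lt_min => /andP [er erho]; apply: Vt.
rewrite classA_gt0 ?e0 ?ltW //=.
have : `|zeta 0 - zeta e| < t.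
  apply: near0; first by rewrite /ball /= sub0r normrN gtr0_norm.
  by rewrite /= in_itv /= !ltW.
by rewrite classA_zeta0 sub0r normrN => /(le_lt_trans (ler_norm _)).
Qed.

Lemma classA_image_at_right : zeta @ 0^'+ `<=` 0^'+.
Proof.
case: zetaA => zeta_cont _ _ _ _.
move=> V /at_right0P [t t0 Vt]; apply/at_right0P.
pose t' := Num.min (t / 2) rho.
have t'_gt0 : 0 < t' by rewrite lt_min divr_gt0.
have t'_t : t' < t by rewrite gt_min ltr_pdivrMr //; lra.
have t'_in : t' \in `[0, rho] by rewrite in_itv /= ltW //= ge_min lexx orbT.
exists (zeta t') => [|v /andP [v0 vt']]; first by rewrite classA_gt0 // t'_gt0 -(itvP t'_in).
have zt'_le : zeta t' <= zeta rho.
  by rewrite classA_le // ?(itvP t'_in) // in_itv /= lexx ltW.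
have v_between : Num.min (zeta 0) (zeta rho) <= v <= Num.max (zeta 0) (zeta rho).
  by rewrite classA_zeta0 ge_min le_max (ltW v0) (ltW (lt_le_trans vt' zt'_le)) !orbT.
have [u u_in zu] := IVT (ltW rho_gt0) zeta_cont v_between.
rewrite -zu; apply: Vt; rewrite lt_neqAle (itvP u_in) andbT; apply/andP; split.
  by apply/eqP => u_eq0; move: v0; rewrite -zu -u_eq0 classA_zeta0 ltxx.
apply: lt_trans t'_t; rewrite ltNge; apply: contraTN vt' => t'_u.
by rewrite -leNgt -zu classA_le.
Qed.

Lemma classA_at_right : zeta @ 0^'+ = 0^'+.
Proof.
by apply/seteqP; split; [exact: classA_image_at_right | exact: classA_cvg_at_right].
Qed.

End ClassA.

Definition log_scaled (R : realType) (A : R -> \bar R) (e : R) : \bar R :=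
  ((`|ln e|)^-1)%:E * A e.

Lemma log_scaled_ge0 (R : realType) (A : R -> \bar R) :
  (\forall e \near (0 : R)^'+, 0 <= A e)%E -> \forall e \near 0^'+, (0 <= log_scaled A e)%E.
Proof. by apply: filterS => e A_ge0; rewrite mule_ge0 ?lee_fin ?invr_ge0. Qed.

Lemma normr_ln_gt0 (R : realType) (x : R) : 0 < x < 1 -> 0 < `|ln x|.
Proof. by move=> /ln_lt0 x0; rewrite normr_gt0 lt_eqF. Qed.

Lemma lee_inv_mul_ratio (R : realType) (r1 r2 c : R) (U V : \bar R) :
  0 < r1 -> 0 < r2 -> (U <= V)%E -> (0 <= V)%E -> r2 / r1 <= c ->
  ((r1^-1)%:E * U <= c%:E * ((r2^-1)%:E * V))%E.
Proof.
move=> r1_gt0 r2_gt0 UV V0 ratio_le.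
apply: (@le_trans _ _ ((r1^-1)%:E * V)%E).
  by apply: lee_wpmul2l => //; rewrite lee_fin invr_ge0 ltW.
have -> : ((r1^-1)%:E * V = (r2 / r1)%:E * ((r2^-1)%:E * V))%E.
  by rewrite muleA -EFinM mulrAC divff ?mul1r // gt_eqF.
by rewrite lee_wpmul2r // mule_ge0 // lee_fin invr_ge0 ltW.
Qed.

Section Transfer.
Variables (R : realType) (zeta : R -> R) (k : R) (A B : R -> \bar R).
Hypothesis k_gt0 : 0 < k.
Hypothesis zeta_at_right : zeta @ 0^'+ = 0^'+.
Hypothesis zeta_ratio : ln (zeta e) / ln e @[e --> 0^'+] --> k.
Hypothesis B_ge0 : forall d, 0 < d -> (0 <= B d)%E.
Hypothesis A_ge : \forall e \near 0^'+, (B (zeta e) <= A e)%E.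
Hypothesis A_le : \forall e \near 0^'+, (A e <= B (zeta e / 2))%E.

Lemma zeta_near0 t : 0 < t -> \forall e \near 0^'+, 0 < zeta e < t.
Proof.
by move=> t0; apply: (at_right0_cvg_near _ t0); rewrite zeta_at_right.
Qed.

Lemma half_zeta_at_right : (fun e => zeta e / 2) @ 0^'+ = 0^'+.
Proof.
have -> : (fun e => zeta e / 2) @ 0^'+ = (fun d => d / 2) @ (zeta @ 0^'+) by [].
by rewrite zeta_at_right at_right0_scale ?invr_gt0.
Qed.

Lemma ratio_half_cvg : `|ln (zeta e / 2)| / `|ln e| @[e --> 0^'+] --> k.
Proof.
have lnV0 : (ln e)^-1 @[e --> (0 : R)^'+] --> 0.
  have lnNeg : \forall e \near (0 : R)^'+, 0 > ln e.
    by near=> e; apply: ln_lt0; near: e; exact: at_right0_lt1.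
  by apply/(ltr0_cvgV0 lnNeg); exact: lnNy.
have lim : ln (zeta e) / ln e - (ln e)^-1 * ln 2 @[e --> (0 : R)^'+] --> k - 0 * ln 2.
  exact: cvgB zeta_ratio (cvgM lnV0 (cvg_cst _)).
rewrite mul0r subr0 in lim.
apply: cvg_trans _ lim; apply: near_eq_cvg; near=> e.
have /andP [ze0 ze1] : 0 < zeta e < 1 by near: e; apply: zeta_near0.
rewrite norm_ln_div; last 2 first.
- by rewrite divr_gt0 //= ltr_pdivrMr //; lra.
- by near: e; exact: at_right0_lt1.
by rewrite lnM ?posrE ?invr_gt0 // lnV ?posrE // mulrBl (mulrC _^-1).
Unshelve. all: end_near.
Qed.

Lemma ratio_inv_cvg : `|ln e| / `|ln (zeta e)| @[e --> 0^'+] --> k^-1.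
Proof.
apply: cvg_trans _ (cvgV (lt0r_neq0 k_gt0) zeta_ratio); apply: near_eq_cvg; near=> e.
rewrite /= invf_div norm_ln_div //; last by near: e; apply: zeta_near0.
by near: e; exact: at_right0_lt1.
Unshelve. all: end_near.
Qed.

Lemma B_near_ge0 : \forall d \near 0^'+, (0 <= B d)%E.
Proof. by near=> d; rewrite B_ge0. Unshelve. all: end_near. Qed.

Lemma A_near_ge0 : \forall e \near 0^'+, (0 <= A e)%E.
Proof.
near=> e; apply: le_trans (_ : B (zeta e) <= A e)%E; last by near: e.
by rewrite B_ge0 //; near: e; apply: filterS (zeta_near0 ltr01) => ? /andP [].
Unshelve. all: end_near.
Qed.

Lemma log_scaled_le_half c : k < c ->
  \forall e \near 0^'+, (log_scaled A e <= c%:E * log_scaled B (zeta e / 2))%E.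
Proof.
move=> kc; near=> e.
have e_in : 0 < e < 1 by near: e; exact: at_right0_lt1.
have /andP [ze0 ze1] : 0 < zeta e < 1 by near: e; apply: zeta_near0.
have ze2_in : 0 < zeta e / 2 < 1 by rewrite divr_gt0 //= ltr_pdivrMr //; lra.
apply: lee_inv_mul_ratio; rewrite ?normr_ln_gt0 ?B_ge0 //; first by near: e.
  by case/andP: ze2_in.
by near: e; exact: cvgr_le ratio_half_cvg _ kc.
Unshelve. all: end_near.
Qed.

Lemma log_scaled_zeta_le c : k^-1 < c ->
  \forall e \near 0^'+, (log_scaled B (zeta e) <= c%:E * log_scaled A e)%E.
Proof.
move=> kc; near=> e.
have e_in : 0 < e < 1 by near: e; exact: at_right0_lt1.
have ze_in : 0 < zeta e < 1 by near: e; apply: zeta_near0.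
apply: lee_inv_mul_ratio; rewrite ?normr_ln_gt0 //.
- by near: e.
- by near: e; exact: A_near_ge0.
by near: e; exact: cvgr_le ratio_inv_cvg _ kc.
Unshelve. all: end_near.
Qed.

Lemma limf_esup_log_scaled :
  limf_esup (log_scaled A) 0^'+ = (k%:E * limf_esup (log_scaled B) 0^'+)%E.
Proof.
have kV_gt0 : 0 < k^-1 by rewrite invr_gt0.
apply: lee_pmul_antisym => //.
  apply: lee_pmul_gt => // [|c kc]; first exact/limf_esup_ge0_near/log_scaled_ge0/B_near_ge0.
  have -> : limf_esup (log_scaled B) 0^'+ =
      limf_esup (log_scaled B \o (fun e => zeta e / 2)) 0^'+.
    by rewrite limf_esup_comp half_zeta_at_right.
  rewrite -limf_esup_pZl ?(lt_trans k_gt0) //.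
  exact: limf_esup_le_near (log_scaled_le_half kc).
apply: lee_pmul_gt => // [|c kc]; first exact/limf_esup_ge0_near/log_scaled_ge0/A_near_ge0.
have -> : limf_esup (log_scaled B) 0^'+ = limf_esup (log_scaled B \o zeta) 0^'+.
  by rewrite limf_esup_comp zeta_at_right.
rewrite -limf_esup_pZl ?(lt_trans kV_gt0) //.
exact: limf_esup_le_near (log_scaled_zeta_le kc).
Qed.

Lemma limf_einf_log_scaled :
  limf_einf (log_scaled A) 0^'+ = (k%:E * limf_einf (log_scaled B) 0^'+)%E.
Proof.
have kV_gt0 : 0 < k^-1 by rewrite invr_gt0.
apply: lee_pmul_antisym => //.
  apply: lee_pmul_gt => // [|c kc]; first exact/limf_einf_ge0_near/log_scaled_ge0/B_near_ge0.
  have -> : limf_einf (log_scaled B) 0^'+ =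
      limf_einf (log_scaled B \o (fun e => zeta e / 2)) 0^'+.
    by rewrite limf_einf_comp half_zeta_at_right.
  rewrite -limf_einf_pZl ?(lt_trans k_gt0) //.
  exact: limf_einf_le_near (log_scaled_le_half kc).
apply: lee_pmul_gt => // [|c kc]; first exact/limf_einf_ge0_near/log_scaled_ge0/A_near_ge0.
have -> : limf_einf (log_scaled B) 0^'+ = limf_einf (log_scaled B \o zeta) 0^'+.
  by rewrite limf_einf_comp zeta_at_right.
rewrite -limf_einf_pZl ?(lt_trans kV_gt0) //.
exact: limf_einf_le_near (log_scaled_zeta_le kc).
Qed.

End Transfer.

Section ZetaSeparation.
Variables (R : realType) (G : groupType) (X : choiceType) (act : G -> X -> X).
Variables (d : X -> X -> R) (rho : R) (zeta : R -> R).
Hypothesis d_le : forall x y, 0 <= d x y <= rho.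
Hypothesis zetaA : classA rho zeta.
Implicit Types (F : seq G) (e : R) (s : seq X).

Lemma separated_of_zeta F e s : e \in `[0, rho] ->
  Defs.separated act (fun x y => zeta (d x y)) F (zeta e) s -> Defs.separated act d F e s.
Proof.
move=> e_in [s_uniq s_sep]; split=> // x y xs ys xy; rewrite ltNge.
apply: contraTN (s_sep _ _ xs ys xy) => bowen_le_e; rewrite -leNgt.
case: zetaA => _ _ _ zeta_ge0 _; apply: bowen_le => [|g gF]; first exact: zeta_ge0.
apply: (classA_le zetaA) => //; first by rewrite in_itv /= d_le.
exact: le_trans (bowen_ge act d x y gF) bowen_le_e.
Qed.

(* zeta need not be strictly increasing, hence the factor 1/2. *)
Lemma zeta_of_separated F e s : 0 < e <= rho ->
  Defs.separated act d F e s -> Defs.separated act (fun x y => zeta (d x y)) F (zeta e / 2) s.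
Proof.
move=> e_in [s_uniq s_sep]; split=> // x y xs ys xy; rewrite ltNge.
apply: contraTN (s_sep _ _ xs ys xy) => bowen_le_ze; rewrite -leNgt.
have /andP [e0 e_rho] := e_in.
apply/ltW/bowen_lt => // g gF; rewrite ltNge; apply: contraTN bowen_le_ze => e_le.
rewrite -ltNge; apply: lt_le_trans (bowen_ge act _ x y gF).
have ze_gt0 := classA_gt0 zetaA e_in.
rewrite (@lt_le_trans _ _ (zeta e)) ?ltr_pdivrMr //; first lra.
by apply: (classA_le zetaA) => //; rewrite in_itv /= ?d_le ?(ltW e0).
Qed.

End ZetaSeparation.

Section MeanDimension.
Variables (R : realType) (G : groupType) (X : topologicalType) (act : G -> X -> X).
Variables (d : X -> X -> R) (zeta : R -> R) (F : nat -> seq G).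
Hypothesis act_cont : continuous_action act.
Hypothesis cptX : compact [set: X].
Hypothesis d_metric : metric_inducing d.
Hypothesis zetaA : classA (diameter d) zeta.
Variables (x0 y0 : X).
Hypothesis x0y0 : x0 <> y0.

Let rho_gt0 := diameter_gt0 cptX d_metric x0y0.
Let d_le := metric_le_diameter cptX d_metric.

Lemma zeta_sep_bounded (E : seq G) r :
  0 < r -> sep_bounded act (fun x y => zeta (d x y)) E r.
Proof.
move=> r0.
have near_e : \forall e \near (0 : R)^'+, [/\ 0 < zeta e < r, 0 < e & e < diameter d].
  near=> e; split.
  - by near: e; apply: (at_right0_cvg_near _ r0); exact: classA_cvg_at_right rho_gt0 zetaA.
  - by near: e; exact: nbhs_right_gt.
  - by near: e; exact: nbhs_right_lt.
have [e [ze_in e0 e_rho]] := @filter_ex _ _ (at_right_proper_filter 0) _ near_e.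
have /andP [_ ze_r] := ze_in.
have [N sizeN] := separated_bounded act_cont cptX d_metric E e0.
exists N => s /(separated_le (ltW ze_r))/(separated_of_zeta d_le zetaA) s_sep.
by apply/sizeN/s_sep; rewrite in_itv /= !ltW.
Unshelve. all: end_near.
Qed.

Lemma mdim_level_zeta_ge0 r :
  0 < r -> (0 <= mdim_level act F (fun x y => zeta (d x y)) r)%E.
Proof. by move=> r0; apply: (mdim_level_ge0 x0) => n; exact: zeta_sep_bounded. Qed.

Lemma mdim_level_zeta_le : \forall e \near 0^'+,
  (mdim_level act F (fun x y => zeta (d x y)) (zeta e) <= mdim_level act F d e)%E.
Proof.
near=> e; have e0 : 0 < e by near: e; exact: nbhs_right_gt.
apply: (mdim_level_le x0) => [n|n s].
  exact: (separated_bounded act_cont cptX d_metric (F n) e0).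
apply: (separated_of_zeta d_le zetaA); rewrite in_itv /= ltW //=.
by near: e; exact: nbhs_right_le.
Unshelve. all: end_near.
Qed.

Lemma mdim_level_le_zeta_half : \forall e \near 0^'+,
  (mdim_level act F d e <= mdim_level act F (fun x y => zeta (d x y)) (zeta e / 2))%E.
Proof.
near=> e; have e_in : 0 < e <= diameter d.
  by apply/andP; split; near: e; [exact: nbhs_right_gt | exact: nbhs_right_le].
apply: (mdim_level_le x0) => [n|n s]; last exact: (zeta_of_separated d_le zetaA e_in).
by apply: zeta_sep_bounded; rewrite divr_gt0 // (classA_gt0 zetaA e_in).
Unshelve. all: end_near.
Qed.

End MeanDimension.

Theorem mainTheorem15 (R : realType) (G : groupType) (X : topologicalType)
    (act : G -> X -> X) (d : X -> X -> R) (zeta : R -> R)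
    (F : nat -> seq G) :
  countable_group G ->
  continuous_action act ->
  compact [set: X] ->
  metric_inducing d ->
  folner R F ->
  classA (diameter d) zeta ->
  k_m zeta = k_M zeta ->
  (0 < k_M zeta)%E ->
  mdimM_upper act F d = (k_M zeta * mdimM_upper act F (fun x y => zeta (d x y)))%E /\
  mdimM_lower act F d = (k_M zeta * mdimM_lower act F (fun x y => zeta (d x y)))%E.
Proof.
move=> _ act_cont cptX d_metric _ zetaA k_mM kM_gt0.
(* With at most one point the diameter is 0 and classA says nothing about zeta,
   but both sides vanish. *)
have [X_sub|[x0 [y0 x0y0]]] : (forall x y : X, x = y) \/ exists x y : X, x <> y.
  by apply: contrapT => /not_orP [/existsNP [x /existsNP [y xy]]]; apply; exists x, y.
  have [-> ->] := mdimM_subsingleton act F d X_sub.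
  by have [-> ->] := mdimM_subsingleton act F (fun x y => zeta (d x y)) X_sub; rewrite mule0.
have rho_gt0 := diameter_gt0 cptX d_metric x0y0.
have [k k_gt0 kE] := classA_k_M_real rho_gt0 zetaA kM_gt0.
have zeta_ratio : ln (zeta e) / ln e @[e --> 0^'+] --> k.
  by apply: limf_einf_esup_cvg; rewrite -kE ?k_mM.
have B_ge0 := mdim_level_zeta_ge0 F act_cont cptX d_metric zetaA x0y0.
have A_ge := mdim_level_zeta_le F act_cont cptX d_metric zetaA x0y0.
have A_le := mdim_level_le_zeta_half F act_cont cptX d_metric zetaA x0y0.
have zeta_at_right := classA_at_right rho_gt0 zetaA.
rewrite kE; split.
  exact: (limf_esup_log_scaled k_gt0 zeta_at_right zeta_ratio B_ge0 A_ge A_le).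
exact: (limf_einf_log_scaled k_gt0 zeta_at_right zeta_ratio B_ge0 A_ge A_le).
Qed.
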